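(* Let $R$ be a commutative ring, $n\ge m\ge1$, and $f(t)=a_0+a_1t+\cdots+a_nt^n$, $g(t)=b_0+b_1t+\cdots+b_mt^m$ in $R[t]$. Suppose there is a nonzero divisor $d\in R$, $d\neq 0$, with $\langle a_n,b_m\rangle=\langle d\rangle$. Then for each $j=0,\ldots,m-1$ there is an exact sequence of $R$-modules $$R/\langle d\rangle\to\mathrm{coker}(\psi_{j+1})\to\mathrm{coker}(\psi_j)\to R/\langle d\rangle\to0.$$ In particular, if $d=1$ then $\mathrm{coker}(\psi_j)\cong\mathrm{coker}(\psi_k)$ for all $j,k\in\{0,\ldots,m\}$.
   Context: For $k=0,\ldots,m-1$ put $f_k(t)=a_nt^{n-m+k}+a_{n-1}t^{n-m+k-1}+\cdots+a_{m-k}$, $g_k(t)=b_mt^k+b_{m-1}t^{k-1}+\cdots+b_{m-k}$, and $p_k(t)=g_k(t)f(t)-f_k(t)g(t)$ (of degree $\le n-1$). $R[t]_{\le e}$ denotes polynomials of degree $\le e$. For $j\in\{0,\ldots,m\}$, $\psi_j:R^j\oplus R[t]_{\le m-j-1}\oplus R[t]_{\le n-j-1}\to R[t]_{\le m+n-j-1}$ is the $R$-linear map sending the $i$-th standard basis vector $e_i$ of $R^j$ ($1\le i\le j$) to $p_{m-j+i-1}(t)$ and $(0,a(t),b(t))$ to $a(t)f(t)+b(t)g(t)$. ($\psi_0$ is the Sylvester map, $\psi_m$ the hybrid Bézout map.) *)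

From HB Require Import structures.
From mathcomp Require Import all_boot all_order all_algebra.
Set Implicit Arguments. Unset Strict Implicit. Unset Printing Implicit Defensive.
Import GRing.Theory.
Local Open Scope ring_scope.

Section Defs.
Variable R : comNzRingType.

Definition fk (f : {poly R}) (n m k : nat) : {poly R} :=
  \sum_(i < (n - m + k).+1) f`_(m - k + i) *: 'X^i.

Definition gk (g : {poly R}) (m k : nat) : {poly R} :=
  \sum_(i < k.+1) g`_(m - k + i) *: 'X^i.

Definition pk (f g : {poly R}) (n m k : nat) : {poly R} :=
  gk g m k * f - fk f n m k * g.

(* A module presented as a subquotient W/S inside an ambient R-module V:
   qm_amb = W (the elements), qm_sub = S (the submodule quotiented out). *)
Record qmod (V : lmodType R) := QMod { qm_amb : V -> Prop; qm_sub : V -> Prop }.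

(* coker(psi_j) = R[t]_{<= m+n-j-1} / im(psi_j), where
   psi_j(x, a, b) = sum_{i=1}^{j} x_i p_{m-j+i-1} + a f + b g,
   with deg a <= m-j-1 and deg b <= n-j-1  (size = degree + 1). *)
Definition im_psi (f g : {poly R}) (n m j : nat) (p : {poly R}) : Prop :=
  exists (x : 'I_j -> R) (a b : {poly R}),
    [/\ (size a <= m - j)%N, (size b <= n - j)%N &
        p = \sum_(i < j) x i *: pk f g n m (m - j + i) + a * f + b * g].

Definition coker_psi (f g : {poly R}) (n m j : nat) : qmod {poly R} :=
  QMod (fun p : {poly R} => (size p <= m + n - j)%N) (im_psi f g n m j).

Definition R_mod (d : R) : qmod R^o :=
  QMod (fun _ => True) (fun r : R^o => exists w : R, r = w * d).

Section Maps.
Variables (V U Y : lmodType R).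

Definition qmap (M : qmod V) (N : qmod U) (h : V -> U) : Prop :=
  (forall v, qm_amb M v -> qm_amb N (h v)) /\
  (forall v, qm_amb M v -> qm_sub M v -> qm_sub N (h v)).

Definition qexact_at (M1 : qmod Y) (M2 : qmod V) (M3 : qmod U)
  (h1 : Y -> V) (h2 : V -> U) : Prop :=
  forall v, qm_amb M2 v ->
    (qm_sub M3 (h2 v) <-> exists u, qm_amb M1 u /\ qm_sub M2 (v - h1 u)).

Definition qinj (M : qmod V) (N : qmod U) (h : V -> U) : Prop :=
  forall v, qm_amb M v -> qm_sub N (h v) -> qm_sub M v.

Definition qsurj (M : qmod V) (N : qmod U) (h : V -> U) : Prop :=
  forall u, qm_amb N u -> exists v, qm_amb M v /\ qm_sub N (u - h v).

Definition qiso (M : qmod V) (N : qmod U) : Prop :=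
  exists h : {linear V -> U}, [/\ qmap M N h, qinj M N h & qsurj M N h].
End Maps.
End Defs.

From HB Require Import structures.
From mathcomp Require Import all_boot all_order all_algebra zify ring.
Set Implicit Arguments. Unset Strict Implicit. Unset Printing Implicit Defensive.
Import GRing.Theory.
Local Open Scope ring_scope.

(* Write I_j for the image of psi_j, inside V_j = R[t]_(< m+n-j).  Modulo
   I_(j+1), the module I_j is spanned by the elements a t^(m-j-1) f + b t^(n-j-1) g,
   whose coefficient of t^(m+n-j-1) is a a_n + b b_m; and
   b_m t^(m-j-1) f - a_n t^(n-j-1) g lies in I_(j+1), being the top part of
   p_(m-j-1).  Hence the top coefficient maps coker psi_j onto
   R/<a_n, b_m> = R/<d>, with kernel the image of coker psi_(j+1).  As d is
   regular, the syzygies of (a_n, b_m) = (a' d, b' d) are generated by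
   (b', -a'), so the kernel of coker psi_(j+1) -> coker psi_j is generated by
   the class of b' t^(m-j-1) f - a' t^(n-j-1) g, which d kills.  For d = 1 both
   outer terms vanish, and subtracting multiples of a t^(m-j-1) f + b t^(n-j-1) g
   with a a_n + b b_m = 1 makes the isomorphisms explicit. *)

Lemma size_leq_coef0 (R : nzSemiRingType) (p : {poly R}) N :
  (size p <= N.+1)%N -> p`_N = 0 -> (size p <= N)%N.
Proof.
move=> sp pN; apply/leq_sizeP => i; rewrite leq_eqVlt => /orP[/eqP <- //|].
exact: (leq_sizeP _ _ sp).
Qed.

Lemma size_mul_leq (R : nzSemiRingType) (p q : {poly R}) a b :
  (size p <= a)%N -> (size q <= b.+1)%N -> (size (p * q)%R <= a + b)%N.
Proof. by move=> sp sq; apply: leq_trans (size_polyMleq p q) _; lia. Qed.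

Lemma unimodular_syzygy (R : comNzRingType) (a b u v : R) : u * a + v * b = 1 ->
  forall x y, x * a + y * b = 0 -> exists c, x = c * b /\ y = - (c * a).
Proof.
move=> uv1 x y xy0; exists (x * v - y * u); split.
  rewrite -[LHS]mulr1 -uv1.
  transitivity ((x * v - y * u) * b + u * (x * a + y * b)); first by ring.
  by rewrite xy0 mulr0 addr0.
rewrite -[LHS]mulr1 -uv1.
transitivity (- ((x * v - y * u) * a) + v * (x * a + y * b)); first by ring.
by rewrite xy0 mulr0 addr0.
Qed.

Lemma regular_gcd_syzygy (R : comNzRingType) (a b d : R) :
  (forall x, x * d = 0 -> x = 0) ->
  (forall r, (exists u v, r = u * a + v * b) <-> exists w, r = w * d) ->
  exists a' b', [/\ a = a' * d, b = b' * d &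
    forall x y, x * a + y * b = 0 -> exists c, x = c * b' /\ y = - (c * a')].
Proof.
move=> dreg ideal.
have [a' ha] : exists a', a = a' * d by apply/ideal; exists 1, 0; ring.
have [b' hb] : exists b', b = b' * d by apply/ideal; exists 0, 1; ring.
have [u [v dE]] : exists u v, d = u * a + v * b by apply/ideal; exists 1; ring.
have uv1 : u * a' + v * b' = 1.
  apply/eqP; rewrite -subr_eq0; apply/eqP/dreg.
  by rewrite mulrBl mul1r mulrDl -!mulrA -ha -hb -dE subrr.
exists a', b'; split=> // x y xy0; apply: (unimodular_syzygy uv1).
by apply: dreg; rewrite mulrDl -!mulrA -ha -hb.
Qed.

Definition scalev (R : nzRingType) (V : lmodType R) (v : V) (r : R^o) : V := r *: v.

Lemma scalev_is_linear (R : nzRingType) (V : lmodType R) (v : V) : linear (scalev v).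
Proof. by move=> a x y; rewrite /scalev scalerDl scalerA. Qed.

HB.instance Definition _ (R : nzRingType) (V : lmodType R) (v : V) :=
  GRing.isLinear.Build R R^o V _ (scalev v) (scalev_is_linear v).

Section CokerPsi.
Variables (R : comNzRingType) (n m : nat) (f g : {poly R}).
Hypotheses (hmn : (m <= n)%N) (hf : (size f <= n.+1)%N) (hg : (size g <= m.+1)%N).

Implicit Types p q v : {poly R}.

Local Notation I := (im_psi f g n m).

Lemma im_psi0 j : I j 0.
Proof.
exists (fun _ => 0), 0, 0; rewrite size_poly0; split => //.
by rewrite big1 ?mul0r ?addr0 // => i _; rewrite scale0r.
Qed.

Lemma im_psiD j p q : I j p -> I j q -> I j (p + q).
Proof.
move=> [x [a [b [sa sb ->]]]] [x' [a' [b' [sa' sb' ->]]]].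
exists (fun i => x i + x' i), (a + a'), (b + b'); split.
- by apply: leq_trans (size_polyD _ _) _; rewrite geq_max sa.
- by apply: leq_trans (size_polyD _ _) _; rewrite geq_max sb.
rewrite !mulrDl; under [X in _ = X + _ + _]eq_bigr do rewrite scalerDl.
by rewrite big_split /= [LHS]addrACA [X in X + _ = _]addrACA.
Qed.

Lemma im_psiZ j c p : I j p -> I j (c *: p).
Proof.
move=> [x [a [b [sa sb ->]]]].
exists (fun i => c * x i), (c *: a), (c *: b); split.
- exact: leq_trans (size_scale_leq _ _) sa.
- exact: leq_trans (size_scale_leq _ _) sb.
rewrite !scalerDr scaler_sumr -!scalerAl; congr (_ + _ + _).
by apply: eq_bigr => i _; rewrite scalerA.
Qed.

Lemma im_psiB j p q : I j p -> I j q -> I j (p - q).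
Proof. by move=> Ip Iq; rewrite -scaleN1r; apply/im_psiD/im_psiZ. Qed.

Lemma im_psi_sum j k (F : 'I_k -> {poly R}) :
  (forall i, I j (F i)) -> I j (\sum_(i < k) F i).
Proof. by move=> IF; apply: (big_ind (I j)) => //; [exact: im_psi0 | exact: im_psiD]. Qed.

Lemma im_psi_mulf j (a : {poly R}) : (size a <= m - j)%N -> I j (a * f).
Proof.
move=> sa; exists (fun _ => 0), a, 0; rewrite size_poly0; split => //.
by rewrite big1 ?mul0r ?addr0 ?add0r // => i _; rewrite scale0r.
Qed.

Lemma im_psi_mulg j (b : {poly R}) : (size b <= n - j)%N -> I j (b * g).
Proof.
move=> sb; exists (fun _ => 0), 0, b; rewrite size_poly0; split => //.
by rewrite big1 ?mul0r ?addr0 ?add0r // => i _; rewrite scale0r.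
Qed.

Lemma im_psi_pk j i : (i < j)%N -> I j (pk f g n m (m - j + i)).
Proof.
move=> lij; exists (fun k : 'I_j => (k == Ordinal lij)%:R), 0, 0.
rewrite size_poly0 !mul0r !addr0; split => //.
rewrite (bigD1 (Ordinal lij)) //= eqxx scale1r big1 ?addr0 // => k /negbTE ->.
by rewrite scale0r.
Qed.

Lemma size_gk k : (size (gk g m k) <= k.+1)%N.
Proof. by rewrite /gk -(poly_def _ (fun i => g`_(m - k + i))) size_poly. Qed.

Lemma size_fk k : (size (fk f n m k) <= (n - m + k).+1)%N.
Proof. by rewrite /fk -(poly_def _ (fun i => f`_(m - k + i))) size_poly. Qed.

Lemma gk_drop k : (k <= m)%N -> gk g m k = drop_poly (m - k) g.
Proof.
move=> km; apply/polyP => i.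
rewrite /gk -(poly_def _ (fun i => g`_(m - k + i))) coef_poly coef_drop_poly.
case: ltnP => ki; first by rewrite addnC.
by rewrite nth_default //; apply: leq_trans hg _; lia.
Qed.

Lemma fk_drop k : (k <= m)%N -> fk f n m k = drop_poly (m - k) f.
Proof.
move=> km; apply/polyP => i.
rewrite /fk -(poly_def _ (fun i => f`_(m - k + i))) coef_poly coef_drop_poly.
case: ltnP => ki; first by rewrite addnC.
by rewrite nth_default //; apply: leq_trans hf _; lia.
Qed.

(* [p_k t^(m-k)] equals [f_lo g - g_lo f] for the low parts of degree [< m-k],
   which has degree [< n + m - k]. *)
Lemma size_pk k : (k <= m)%N -> (size (pk f g n m k) <= n)%N.
Proof.
move=> km; set s := (m - k)%N.
have dropE (p : {poly R}) : drop_poly s p * 'X^s = p - take_poly s p.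
  by apply/eqP; rewrite eq_sym subr_eq addrC poly_take_drop.
have pkE : pk f g n m k * 'X^s = take_poly s f * g - take_poly s g * f.
  by rewrite /pk gk_drop // fk_drop // mulrBl (mulrAC _ f) (mulrAC _ g) !dropE; ring.
have : (size (pk f g n m k * 'X^s)%R <= s + n)%N.
  rewrite pkE; apply: leq_trans (size_polyD _ _) _; rewrite size_polyN geq_max.
  rewrite (size_mul_leq (size_take_poly s g) hf) andbT.
  by apply: leq_trans (size_mul_leq (size_take_poly s f) hg) _; rewrite leq_add2l.
have [->|pk0] := eqVneq (pk f g n m k) 0; first by rewrite size_poly0.
by rewrite size_mulXn // leq_add2l.
Qed.

Lemma size_im_psi j p : (j <= m)%N -> I j p -> (size p <= m + n - j)%N.
Proof.
move=> jm [x [a [b [sa sb ->]]]].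
have sizeD (q r : {poly R}) : (size q <= m + n - j)%N -> (size r <= m + n - j)%N ->
    (size (q + r)%R <= m + n - j)%N.
  by move=> sq sr; apply: leq_trans (size_polyD _ _) _; rewrite geq_max sq.
apply: (sizeD); last by apply: leq_trans (size_mul_leq sb hg) _; lia.
apply: (sizeD); last by apply: leq_trans (size_mul_leq sa hf) _; lia.
apply: (big_ind (fun q : {poly R} => size q <= m + n - j)%N) => [||i _].
- by rewrite size_poly0.
- exact: sizeD.
- have := ltn_ord i => ltij; apply: leq_trans (size_scale_leq _ _) _.
  by apply: leq_trans (size_pk _) _; lia.
Qed.

Lemma im_psiS j p : (j < m)%N -> I j.+1 p -> I j p.
Proof.
move=> jm [x [a [b [sa sb ->]]]].
apply: im_psiD; last by apply: im_psi_mulg; apply: leq_trans sb _; lia.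
apply: im_psiD; last by apply: im_psi_mulf; apply: leq_trans sa _; lia.
rewrite big_ord_recl addn0; apply: im_psiD.
  apply/im_psiZ/im_psiB.
    by apply: im_psi_mulf; apply: leq_trans (size_gk _) _; lia.
  by apply: im_psi_mulg; apply: leq_trans (size_fk _) _; lia.
apply: im_psi_sum => i; apply: im_psiZ.
have -> : (m - j.+1 + lift ord0 i = m - j + i)%N by rewrite lift0 /=; lia.
exact: im_psi_pk.
Qed.

Lemma im_psi_antimono j k p : (j <= k <= m)%N -> I k p -> I j p.
Proof.
elim: k => [|k IH]; first by rewrite leqn0 => /andP[/eqP ->].
case/andP; rewrite leq_eqVlt ltnS => /orP[/eqP -> // | jk km Ip].
by apply: IH; [rewrite jk ltnW | exact: im_psiS].
Qed.

Definition top_gen j (a b : R) : {poly R} :=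
  (a *: 'X^(m - j.+1)) * f + (b *: 'X^(n - j.+1)) * g.

Lemma scale_top_gen c j a b : c *: top_gen j a b = top_gen j (c * a) (c * b).
Proof. by rewrite /top_gen scalerDr !scalerAl !scalerA. Qed.

Lemma im_psi_top_gen j a b : (j < m)%N -> I j (top_gen j a b).
Proof.
move=> jm; have sX k c : (size (c *: 'X^k : {poly R}) <= k.+1)%N.
  by apply: leq_trans (size_scale_leq _ _) _; rewrite size_polyXn.
apply: im_psiD; [apply: im_psi_mulf | apply: im_psi_mulg]; apply: leq_trans (sX _ _) _; lia.
Qed.

Lemma size_top_gen j a b : (j < m)%N -> (size (top_gen j a b) <= m + n - j)%N.
Proof. by move=> jm; apply/size_im_psi/im_psi_top_gen; rewrite // ltnW. Qed.

Lemma coef_top_gen j a b : (j < m)%N ->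
  (top_gen j a b)`_(m + n - j.+1) = a * f`_n + b * g`_m.
Proof.
move=> jm; rewrite coefD -!scalerAl !coefZ !coefXnM.
have -> : (m + n - j.+1 < m - j.+1)%N = false by apply/negbTE; rewrite -leqNgt; lia.
have -> : (m + n - j.+1 < n - j.+1)%N = false by apply/negbTE; rewrite -leqNgt; lia.
by congr (_ * f`_ _ + _ * g`_ _); lia.
Qed.

Lemma coef_top_im_psiS j q : (j < m)%N -> I j.+1 q -> q`_(m + n - j.+1) = 0.
Proof. by move=> jm /size_im_psi Iq; rewrite nth_default ?Iq. Qed.

Lemma im_psi_decomp j p : (j < m)%N -> I j p ->
  exists a b q, [/\ I j.+1 q, p = q + top_gen j a b &
                    p`_(m + n - j.+1) = a * f`_n + b * g`_m].
Proof.
move=> jm [x [a [b [sa sb pE]]]].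
set a0 := a`_(m - j.+1); set b0 := b`_(n - j.+1).
pose q := \sum_(i < j) x i *: pk f g n m (m - j + i)
          + (a - a0 *: 'X^(m - j.+1)) * f + (b - b0 *: 'X^(n - j.+1)) * g.
have qE : p = q + top_gen j a0 b0.
  by rewrite pE /q /top_gen addrACA -[X in _ = X + _]addrA -!mulrDl !subrK.
have Iq : I j.+1 q.
  have drop_top (c : {poly R}) N :
      (size c <= N.+1)%N -> (size (c - c`_N *: 'X^N)%R <= N)%N.
    move=> sc; apply: size_leq_coef0; last by rewrite coefB coefZ coefXn eqxx mulr1 subrr.
    apply: leq_trans (size_polyD _ _) _; rewrite size_polyN geq_max sc.
    by apply: leq_trans (size_scale_leq _ _) _; rewrite size_polyXn.
  apply: im_psiD; last by apply/im_psi_mulg/drop_top; apply: leq_trans sb _; lia.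
  apply: im_psiD; last by apply/im_psi_mulf/drop_top; apply: leq_trans sa _; lia.
  apply: im_psi_sum => i; apply: im_psiZ.
  have -> : (m - j + i = m - j.+1 + i.+1)%N by have := ltn_ord i; lia.
  by apply: im_psi_pk; rewrite ltnS.
exists a0, b0, q; split=> //.
by rewrite qE coefD (coef_top_im_psiS jm Iq) add0r coef_top_gen.
Qed.

(* The top part of [p_(m-j-1)] is [b_m t^(m-j-1) f - a_n t^(n-j-1) g]; its lower
   part lies in the image of [psi_(j+1)]. *)
Lemma im_psiS_top_gen_syz j : (j < m)%N -> I j.+1 (top_gen j g`_m (- f`_n)).
Proof.
move=> jm; have km : (m - j.+1 <= m)%N by rewrite leq_subr.
set k := (m - j.+1)%N in km *.
pose lg := \sum_(i < k) g`_(m - k + i) *: 'X^i.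
pose lf := \sum_(i < n - m + k) f`_(m - k + i) *: 'X^i.
have gkE : gk g m k = lg + g`_m *: 'X^k by rewrite /gk big_ord_recr /= subnK.
have fkE : fk f n m k = lf + f`_n *: 'X^(n - j.+1).
  by rewrite /fk big_ord_recr /=; congr (_ + f`_ _ *: 'X^_); rewrite /k; lia.
have -> : top_gen j g`_m (- f`_n) = pk f g n m k - lg * f + lf * g.
  by rewrite /top_gen /pk gkE fkE scaleNr -!mul_polyC; ring.
apply: im_psiD; first apply: im_psiB.
- by rewrite -[k]addn0; apply: im_psi_pk.
- by apply: im_psi_mulf; rewrite /lg -(poly_def _ (fun i => g`_(m - k + i))) size_poly.
- apply: im_psi_mulg; rewrite /lf -(poly_def _ (fun i => f`_(m - k + i))).
  by apply: leq_trans (size_poly _ _) _; rewrite /k; lia.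
Qed.

Lemma im_psi_top_coefP j v : (j < m)%N -> (size v <= m + n - j)%N ->
  (exists x y, v`_(m + n - j.+1) = x * f`_n + y * g`_m) <->
  exists u : {poly R}, (size u <= m + n - j.+1)%N /\ I j (v - u).
Proof.
move=> jm sv; split=> [[x [y vN]] | [u [su Ivu]]].
- exists (v - top_gen j x y); split; last by rewrite subKr; exact: im_psi_top_gen.
  apply: size_leq_coef0; last by rewrite coefB coef_top_gen // vN subrr.
  have -> : (m + n - j.+1).+1 = (m + n - j)%N by lia.
  apply: leq_trans (size_polyD _ _) _.
  by rewrite size_polyN geq_max sv size_top_gen.
- have [x [y [q [_ _ vuN]]]] := im_psi_decomp jm Ivu.
  by exists x, y; rewrite -vuN coefB (nth_default _ su) subr0.
Qed.

Lemma qmap_coker_psiS j : (j < m)%N ->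
  qmap (coker_psi f g n m j.+1) (coker_psi f g n m j) idfun.
Proof. by move=> jm; split=> p /= sp; [apply: leq_trans sp _; lia | exact: im_psiS]. Qed.

Lemma qexact_coker_psi (d : R) j : (j < m)%N ->
  (forall r, (exists u v : R, r = u * f`_n + v * g`_m) <-> exists w, r = w * d) ->
  qexact_at (coker_psi f g n m j.+1) (coker_psi f g n m j) (R_mod d)
    idfun (coefp (m + n - j.+1)).
Proof. by move=> jm ideal v /= sv; rewrite -ideal; exact: im_psi_top_coefP. Qed.

Lemma qmap_coker_psi_top (d : R) j : (j < m)%N ->
  (forall r, (exists u v : R, r = u * f`_n + v * g`_m) <-> exists w, r = w * d) ->
  qmap (coker_psi f g n m j) (R_mod d) (coefp (m + n - j.+1)).
Proof.
move=> jm ideal; split=> // v _ /(im_psi_decomp jm) [x [y [_ [_ _ vN]]]].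
by apply/ideal; exists x, y.
Qed.

Lemma qsurj_coker_psi_top d j : (j < m)%N ->
  qsurj (coker_psi f g n m j) (R_mod d) (coefp (m + n - j.+1)).
Proof.
move=> jm r _; exists (r *: 'X^(m + n - j.+1)); split.
  by apply: leq_trans (size_scale_leq _ _) _; rewrite size_polyXn; lia.
by exists 0; rewrite /= coefZ coefXn eqxx mulr1 subrr mul0r.
Qed.

Section Syzygy.
Variables (a' b' : R).
Hypothesis syz :
  forall x y, x * f`_n + y * g`_m = 0 -> exists c, x = c * b' /\ y = - (c * a').

Definition torsion_gen j := top_gen j b' (- a').

Lemma im_psi_capS j v : (j < m)%N -> (size v <= m + n - j.+1)%N ->
  I j v <-> exists r, I j.+1 (v - r *: torsion_gen j).
Proof.
move=> jm sv; split=> [Iv | [r Ivr]].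
- have [x [y [q [Iq vE vN]]]] := im_psi_decomp jm Iv.
  have [c [xE yE]] : exists c, x = c * b' /\ y = - (c * a').
    by apply: syz; rewrite -vN nth_default.
  by exists c; rewrite vE xE yE scale_top_gen mulrN addrK.
- rewrite -(subrK (r *: torsion_gen j) v); apply: im_psiD.
    exact: im_psiS.
  exact/im_psiZ/im_psi_top_gen.
Qed.

Lemma qexact_coker_psiS d j : (j < m)%N ->
  qexact_at (R_mod d) (coker_psi f g n m j.+1) (coker_psi f g n m j)
    (scalev (torsion_gen j)) idfun.
Proof.
move=> jm v /= sv; rewrite im_psi_capS //.
by split=> [[r Ir] | [r [_ Ir]]]; exists r.
Qed.

Variable d : R.
Hypotheses (ha : f`_n = a' * d) (hb : g`_m = b' * d).

Lemma size_torsion_gen j : (j < m)%N -> (size (torsion_gen j) <= m + n - j.+1)%N.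
Proof.
move=> jm; apply: size_leq_coef0.
  have -> : (m + n - j.+1).+1 = (m + n - j)%N by lia.
  exact: size_top_gen.
by rewrite coef_top_gen // ha hb mulNr mulrCA mulrA subrr.
Qed.

Lemma im_psiS_scale_torsion_gen j : (j < m)%N -> I j.+1 (d *: torsion_gen j).
Proof.
move=> jm; rewrite scale_top_gen mulrN ![d * _]mulrC -ha -hb.
exact: im_psiS_top_gen_syz.
Qed.

Lemma qmap_torsion_gen j : (j < m)%N ->
  qmap (R_mod d) (coker_psi f g n m j.+1) (scalev (torsion_gen j)).
Proof.
move=> jm; split=> [r _ | _ _ [w ->]]; rewrite /= /scalev.
  by apply: leq_trans (size_scale_leq _ _) _; exact: size_torsion_gen.
by rewrite -scalerA; exact/im_psiZ/im_psiS_scale_torsion_gen.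
Qed.

End Syzygy.

Section UnitIdeal.
Variables (u0 v0 : R).
Hypothesis unit_top : u0 * f`_n + v0 * g`_m = 1.

Lemma im_psiS_unit j p : (j < m)%N -> (size p <= m + n - j.+1)%N -> I j p -> I j.+1 p.
Proof.
move=> jm sp /(im_psi_capS (unimodular_syzygy unit_top) jm sp) [r Ipr].
rewrite -(subrK (r *: torsion_gen f`_n g`_m j) p); apply: im_psiD => //.
exact/im_psiZ/im_psiS_top_gen_syz.
Qed.

Lemma im_psi_cap_unit j k p : (j <= k <= m)%N -> (size p <= m + n - k)%N ->
  I j p -> I k p.
Proof.
elim: k => [|k IH]; first by rewrite leqn0 => /andP[/eqP ->].
case/andP; rewrite leq_eqVlt ltnS => /orP[/eqP -> // | jk km sp Ip].
apply: im_psiS_unit => //; apply: IH => //; first by rewrite jk ltnW.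
by apply: leq_trans sp _; lia.
Qed.

(* [top_gen j u0 v0] has top coefficient 1. *)
Definition reduce_top j (p : {poly R}) : {poly R} :=
  p - p`_(m + n - j.+1) *: top_gen j u0 v0.

Fixpoint reduce c j p := if c is c'.+1 then reduce c' j.+1 (reduce_top j p) else p.

Lemma reduce_top_is_linear j : linear (reduce_top j).
Proof.
move=> a p q; rewrite /reduce_top coefD coefZ scalerDl -scalerA scalerBr.
by rewrite opprD addrACA.
Qed.

Lemma reduce_is_linear c j : linear (reduce c j).
Proof. by elim: c j => [|c IH] j a p q //=; rewrite reduce_top_is_linear IH. Qed.

HB.instance Definition _ c j :=
  GRing.isLinear.Build R {poly R} {poly R} _ (reduce c j) (reduce_is_linear c j).

Lemma size_reduce_top j p : (j < m)%N -> (size p <= m + n - j)%N ->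
  (size (reduce_top j p) <= m + n - j.+1)%N.
Proof.
move=> jm sp; have topE : (m + n - j = (m + n - j.+1).+1)%N by lia.
apply: size_leq_coef0.
  apply: leq_trans (size_polyD _ _) _; rewrite size_polyN geq_max -topE sp.
  exact: leq_trans (size_scale_leq _ _) (size_top_gen _ _ jm).
by rewrite coefB coefZ coef_top_gen // unit_top mulr1 subrr.
Qed.

Lemma im_psi_sub_reduce_top j p : (j < m)%N -> I j (p - reduce_top j p).
Proof. by move=> jm; rewrite subKr; exact/im_psiZ/im_psi_top_gen. Qed.

Lemma reduce_top_id j p : (size p <= m + n - j.+1)%N -> reduce_top j p = p.
Proof. by move=> sp; rewrite /reduce_top nth_default // scale0r subr0. Qed.

Lemma size_reduce c j p : (j + c <= m)%N -> (size p <= m + n - j)%N ->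
  (size (reduce c j p) <= m + n - (j + c))%N.
Proof.
elim: c j p => [|c IH] j p /= jcm sp; first by rewrite addn0.
by rewrite addnS -addSn; apply: IH; [lia | apply: size_reduce_top => //; lia].
Qed.

Lemma im_psi_sub_reduce c j p : (j + c <= m)%N -> (size p <= m + n - j)%N ->
  I j (p - reduce c j p).
Proof.
elim: c j p => [|c IH] j p /= jcm sp; first by rewrite subrr; exact: im_psi0.
have jm : (j < m)%N by lia.
rewrite -(subrKA (reduce_top j p)); apply: im_psiD; first exact: im_psi_sub_reduce_top.
by apply: im_psiS => //; apply: IH; [lia | exact: size_reduce_top].
Qed.

Lemma reduce_id c j p : (size p <= m + n - (j + c))%N -> reduce c j p = p.
Proof.
elim: c j => [|c IH] j //= sp.
rewrite reduce_top_id ?IH ?addSnnS //.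
by apply: leq_trans sp _; lia.
Qed.

Lemma qiso_coker_psi_reduce j k : (j <= k <= m)%N ->
  qiso (coker_psi f g n m j) (coker_psi f g n m k).
Proof.
case/andP=> jk km; have kE := subnKC jk; set c := (k - j)%N in kE.
have jcm : (j + c <= m)%N by rewrite kE.
exists (reduce c j); split.
- split=> p /= sp; first by rewrite -kE; exact: size_reduce.
  move=> Ip; rewrite -kE; apply: (im_psi_cap_unit (j := j)).
  + by rewrite leq_addr.
  + exact: size_reduce.
  + by rewrite -(subKr p (reduce c j p)); apply: im_psiB => //; exact: im_psi_sub_reduce.
- move=> p /= sp Ir; rewrite -(subrK (reduce c j p) p); apply: im_psiD.
    exact: im_psi_sub_reduce.
  by apply: (im_psi_antimono (k := k)); rewrite ?jk.
- move=> q /= sq; exists q; split; first by apply: leq_trans sq _; lia.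
  by rewrite reduce_id ?kE // subrr; exact: im_psi0.
Qed.

Lemma qiso_coker_psi_incl j k : (k <= j <= m)%N ->
  qiso (coker_psi f g n m j) (coker_psi f g n m k).
Proof.
case/andP=> kj jm; have jE := subnKC kj; set c := (j - k)%N in jE.
have kcm : (k + c <= m)%N by rewrite jE.
exists idfun; split.
- split=> p /= sp; first by apply: leq_trans sp _; lia.
  by apply: (im_psi_antimono (k := j)); rewrite ?kj.
- by move=> p /= sp; apply: im_psi_cap_unit; rewrite ?kj.
- move=> q /= sq; exists (reduce c k q); split; last exact: im_psi_sub_reduce.
  by rewrite -jE; exact: size_reduce.
Qed.

Lemma qiso_coker_psi j k : (j <= m)%N -> (k <= m)%N ->
  qiso (coker_psi f g n m j) (coker_psi f g n m k).
Proof.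
move=> jm km; case: (leqP j k) => [jk | /ltnW kj].
  by apply: qiso_coker_psi_reduce; rewrite jk.
by apply: qiso_coker_psi_incl; rewrite kj.
Qed.

End UnitIdeal.

End CokerPsi.

Unset Implicit Arguments.

Theorem theorem5p1 (R : comNzRingType) (n m : nat) (f g : {poly R}) (d : R)
  (hm : (1 <= m)%N) (hmn : (m <= n)%N)
  (hf : (size f <= n.+1)%N) (hg : (size g <= m.+1)%N)
  (hd0 : d != 0) (hdreg : forall x : R, x * d = 0 -> x = 0)
  (hideal : forall r : R,
     (exists u v : R, r = u * f`_n + v * g`_m) <-> (exists w : R, r = w * d)) :
  (forall j : nat, (j < m)%N ->
     exists (al : {linear R^o -> {poly R}})
            (be : {linear {poly R} -> {poly R}})
            (ga : {linear {poly R} -> R^o}),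
       [/\ qmap (R_mod d) (coker_psi f g n m j.+1) al,
           qmap (coker_psi f g n m j.+1) (coker_psi f g n m j) be
         & qmap (coker_psi f g n m j) (R_mod d) ga] /\
       [/\ qexact_at (R_mod d) (coker_psi f g n m j.+1) (coker_psi f g n m j) al be,
           qexact_at (coker_psi f g n m j.+1) (coker_psi f g n m j) (R_mod d) be ga
         & qsurj (coker_psi f g n m j) (R_mod d) ga])
  /\
  (d = 1 -> forall j k : nat, (j <= m)%N -> (k <= m)%N ->
     qiso (coker_psi f g n m j) (coker_psi f g n m k)).
Proof.
have [a' [b' [ha hb syz]]] := regular_gcd_syzygy hdreg hideal.
split=> [j jm | d1].
  exists (scalev (torsion_gen n m f g a' b' j)), idfun, (coefp (m + n - j.+1)).
  split; split.
  - by apply: qmap_torsion_gen.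
  - by apply: qmap_coker_psiS.
  - by apply: qmap_coker_psi_top.
  - by apply: qexact_coker_psiS.
  - by apply: qexact_coker_psi.
  - by apply: qsurj_coker_psi_top.
have [u0 [v0 unit_top]] : exists u0 v0, 1 = u0 * f`_n + v0 * g`_m.
  by apply/hideal; exists 1; rewrite d1 mulr1.
exact: qiso_coker_psi (esym unit_top).
Qed.
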